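(* Let $G$ be a group and $H\subseteq G$ a subgroup with weak $n$-paradoxical towers for some $n\in\mathbb N$. Then $G$ has weak $n$-paradoxical towers.
   Context: For $n\in\mathbb N$, a group $G$ has weak $n$-paradoxical towers if for every $m\in\mathbb N$ there exist a finite subset $D\subseteq G$ with $|D|\ge m$, subsets $K_1,\dots,K_n\subseteq G$ and elements $g_1,\dots,g_n\in G$ such that for each $j$ the sets $\{dK_j\}_{d\in D}$ are pairwise disjoint, and $\bigcup_{j=1}^n g_jK_j=G$. *)

From Stdlib Require Import List Arith.
Import ListNotations.

(* A group: carrier with associative multiplication, left identity and
   left inverses (these axioms imply the usual two-sided ones). *)
Record group := Group {
  carrier :> Type;
  gmul : carrier -> carrier -> carrier;
  gone : carrier;
  ginv : carrier -> carrier;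
  gmulA : forall x y z, gmul x (gmul y z) = gmul (gmul x y) z;
  gmul1 : forall x, gmul gone x = x;
  gmulV : forall x, gmul (ginv x) x = gone
}.

Definition is_subgroup (G : group) (H : G -> Prop) : Prop :=
  H (gone G) /\
  (forall x y, H x -> H y -> H (gmul G x y)) /\
  (forall x, H x -> H (ginv G x)).

(* Weak n-paradoxical towers of the group S (a subgroup of G, with the
   group structure inherited from G): all data D, K_j, g_j live inside S. *)
Definition weak_paradoxical_towers_in (G : group) (S : G -> Prop) (n : nat)
  : Prop :=
  forall m : nat,
  exists (D : list G) (K : nat -> G -> Prop) (g : nat -> G),
    NoDup D /\ m <= length D /\
    (forall d, In d D -> S d) /\
    (forall j, j < n -> forall k, K j k -> S k) /\
    (forall j, j < n -> S (g j)) /\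
    (forall j, j < n -> forall d d', In d D -> In d' D -> d <> d' ->
       forall k k', K j k -> K j k' -> gmul G d k <> gmul G d' k') /\
    (forall x, S x -> exists j, j < n /\ exists k, K j k /\ x = gmul G (g j) k).

Definition weak_paradoxical_towers (G : group) (n : nat) : Prop :=
  weak_paradoxical_towers_in G (fun _ => True) n.

(* Fix a set T of representatives of the right cosets of H and replace each
   K_j by K_j T. Since G = H T, the sets g_j K_j T still cover G. A coincidence
   d k t = d' k' t' with d, d', k, k' in H puts t and t' in the same right coset,
   so t = t' and d k = d' k': the translates d K_j T stay pairwise disjoint. *)
From Stdlib Require Import List.
From Stdlib Require Import ClassicalEpsilon FunctionalExtensionality PropExtensionality.

Section GroupLemmas.
Variable G : group.
Local Notation "x * y" := (gmul G x y).
Local Notation "x ^-1" := (ginv G x) (at level 3).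
Local Notation "1" := (gone G).

Lemma mulgV (x : G) : x * x^-1 = 1.
Proof.
  assert (idem : (x * x^-1) * (x * x^-1) = x * x^-1).
  { rewrite <- gmulA, (gmulA G x^-1 x), gmulV, gmul1. reflexivity. }
  rewrite <- (gmul1 G (x * x^-1)), <- (gmulV G (x * x^-1)), <- gmulA, idem.
  reflexivity.
Qed.

Lemma mulg1 (x : G) : x * 1 = x.
Proof. rewrite <- (gmulV G x), gmulA, mulgV, gmul1. reflexivity. Qed.

Lemma mulKg (a b : G) : a^-1 * (a * b) = b.
Proof. rewrite gmulA, gmulV, gmul1. reflexivity. Qed.

Lemma mulgK (a b : G) : (a * b) * b^-1 = a.
Proof. rewrite <- gmulA, mulgV, mulg1. reflexivity. Qed.

Lemma mulgVK (a b : G) : (a * b^-1) * b = a.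
Proof. rewrite <- gmulA, gmulV, mulg1. reflexivity. Qed.

Lemma invMg (a b : G) : (a * b)^-1 = b^-1 * a^-1.
Proof.
  assert (same_left_inverse : (a * b)^-1 * (a * b) = (b^-1 * a^-1) * (a * b)).
  { rewrite gmulV, <- gmulA, mulKg, gmulV. reflexivity. }
  rewrite <- (mulgK ((a * b)^-1) (a * b)), same_left_inverse, mulgK.
  reflexivity.
Qed.

Lemma invgK (a : G) : (a^-1)^-1 = a.
Proof. rewrite <- (mulg1 ((a^-1)^-1)), <- (gmulV G a), mulKg. reflexivity. Qed.

End GroupLemmas.

Section RightCosets.
Variable G : group.
Variable H : G -> Prop.
Hypothesis subH : is_subgroup G H.
Local Notation "x * y" := (gmul G x y).
Local Notation "x ^-1" := (ginv G x) (at level 3).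
Local Notation "1" := (gone G).

Let group1 : H 1 := proj1 subH.
Let groupM : forall x y, H x -> H y -> H (x * y) := proj1 (proj2 subH).
Let groupV : forall x, H x -> H x^-1 := proj2 (proj2 subH).

Definition same_rcoset (a b : G) : Prop := H (a * b^-1).

Lemma same_rcoset_refl (a : G) : same_rcoset a a.
Proof. unfold same_rcoset. rewrite mulgV. exact group1. Qed.

Lemma same_rcoset_sym (a b : G) : same_rcoset a b -> same_rcoset b a.
Proof.
  unfold same_rcoset. intro hab. apply groupV in hab.
  rewrite invMg, invgK in hab. exact hab.
Qed.

Lemma same_rcoset_trans (a b c : G) :
  same_rcoset a b -> same_rcoset b c -> same_rcoset a c.
Proof.
  unfold same_rcoset. intros hab hbc. pose proof (groupM _ _ hab hbc) as habc.
  rewrite <- gmulA, mulKg in habc. exact habc.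
Qed.

Definition rcoset_repr (x : G) : G :=
  epsilon (inhabits 1) (fun t => same_rcoset t x).

Lemma same_rcoset_repr (x : G) : same_rcoset (rcoset_repr x) x.
Proof.
  apply (epsilon_spec (inhabits 1) (fun t => same_rcoset t x)).
  exists x. apply same_rcoset_refl.
Qed.

(* The representative depends only on the coset, by extensionality of the
   predicate handed to [epsilon]. *)
Lemma rcoset_repr_eq (x y : G) : same_rcoset x y -> rcoset_repr x = rcoset_repr y.
Proof.
  intro hxy. unfold rcoset_repr.
  replace (fun t => same_rcoset t x) with (fun t => same_rcoset t y);
    [reflexivity|].
  apply functional_extensionality; intro t; apply propositional_extensionality.
  split; intro ht; eauto using same_rcoset_trans, same_rcoset_sym.
Qed.

Definition rtransversal (t : G) : Prop := rcoset_repr t = t.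

Lemma rtransversal_repr (x : G) : rtransversal (rcoset_repr x).
Proof. apply rcoset_repr_eq, same_rcoset_repr. Qed.

Lemma rtransversal_inj (t t' : G) :
  rtransversal t -> rtransversal t' -> same_rcoset t t' -> t = t'.
Proof. intros ht ht' htt'. rewrite <- ht, <- ht'. apply rcoset_repr_eq, htt'. Qed.

Definition setmul (A B : G -> Prop) (y : G) : Prop :=
  exists a b, A a /\ B b /\ y = a * b.

Definition translates_disjoint (D : list G) (K : G -> Prop) : Prop :=
  forall d d', In d D -> In d' D -> d <> d' ->
  forall k k', K k -> K k' -> d * k <> d' * k'.

Lemma translates_disjoint_setmul_rtransversal (D : list G) (K : G -> Prop) :
  (forall d, In d D -> H d) -> (forall k, K k -> H k) ->
  translates_disjoint D K -> translates_disjoint D (setmul K rtransversal).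
Proof.
  intros HD HK disjK d d' hd hd' neq y y'
    [k [t [hk [ht ->]]]] [k' [t' [hk' [ht' ->]]]] coinc.
  rewrite !gmulA in coinc.
  assert (same_tt' : same_rcoset t t').
  { unfold same_rcoset.
    replace (t * t'^-1) with ((d * k)^-1 * (d' * k')).
    - apply groupM; [apply groupV|]; apply groupM; auto.
    - rewrite <- (mulgK G (d' * k') t'), <- coinc, <- gmulA, mulKg. reflexivity. }
  pose proof (rtransversal_inj t t' ht ht' same_tt') as <-.
  apply (disjK d d' hd hd' neq k k' hk hk').
  rewrite <- (mulgK G (d * k) t), coinc, mulgK. reflexivity.
Qed.

Lemma cover_setmul_rtransversal (n : nat) (g : nat -> G) (K : nat -> G -> Prop) :
  (forall h, H h -> exists j, j < n /\ exists k, K j k /\ h = g j * k) ->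
  forall x, exists j, j < n /\ exists y, setmul (K j) rtransversal y /\ x = g j * y.
Proof.
  intros coverH x.
  destruct (coverH (x * (rcoset_repr x)^-1)) as [j [hj [k [hk Ek]]]].
  { apply same_rcoset_sym, same_rcoset_repr. }
  exists j. split; [exact hj|]. exists (k * rcoset_repr x). split.
  - exists k, (rcoset_repr x). repeat split; auto using rtransversal_repr.
  - rewrite gmulA, <- Ek, mulgVK. reflexivity.
Qed.

End RightCosets.

Theorem proposition3p12 (G : group) (H : G -> Prop) (n : nat) :
  is_subgroup G H ->
  weak_paradoxical_towers_in G H n ->
  weak_paradoxical_towers G n.
Proof.
  intros subH towersH m.
  destruct (towersH m) as [D [K [g [nodupD [lenD [HD [HK [_ [disjK coverH]]]]]]]]].
  exists D, (fun j => setmul G (K j) (rtransversal G H)), g.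
  repeat split; auto.
  - intros j hj.
    exact (translates_disjoint_setmul_rtransversal G H subH D (K j)
             HD (HK j hj) (disjK j hj)).
  - intros x _. apply cover_setmul_rtransversal; auto.
Qed.
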